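(* For any potentials $W$ and $\Theta$ and any $0<\kappa'<\kappa$, $$\|\mathrm{ad}_W\Theta\|_{\kappa'}\leq\frac{18}{\kappa'(\kappa-\kappa')}\|\Theta\|_\kappa\|W\|_\kappa.$$
   Context: $\Lambda$ is a finite set of sites, each carrying a finite-dimensional Hilbert space; $\|\cdot\|$ is the operator norm. A potential $Q$ is a family of operators $Q_Z$, $Z\subseteq\Lambda$, with $Q_Z$ supported on $Z$. Norm: $\|Q\|_\kappa=\sup_{x\in\Lambda}\sum_{Z\ni x}e^{\kappa|Z|}\|Q_Z\|$. Commutator of potentials: $(\mathrm{ad}_W\Theta)_Z=\sum_{Z_1\cap Z_2\neq\emptyset,Z_1\cup Z_2=Z}[W_{Z_1},\Theta_{Z_2}]$. *)

From HB Require Import structures.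
From mathcomp Require Import all_boot all_order all_algebra.
From mathcomp Require Import classical_sets reals.
From mathcomp Require Import sequences.
From mathcomp Require Import complex.
Set Implicit Arguments. Unset Strict Implicit. Unset Printing Implicit Defensive.
Import Order.TTheory GRing.Theory Num.Theory.
Local Open Scope ring_scope.

Section QuantumLattice.
Variables (R : realType) (Lam : finType) (d : Lam -> nat).

(* Basis configurations of the tensor product  H = ⊗_{x in Lam} C^(d x). *)
Definition conf := {dffun forall x : Lam, 'I_(d x)}.

Definition op := conf -> conf -> R[i].
Definition vec := conf -> R[i].

Definition opapp (A : op) (v : vec) : vec := fun s => \sum_(t : conf) A s t * v t.
Definition opmul (A B : op) : op := fun s t => \sum_(u : conf) A s u * B u t.
Definition comm (A B : op) : op := fun s t => opmul A B s t - opmul B A s t.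

Definition cabs2 (z : R[i]) : R := let: Complex a b := z in a ^+ 2 + b ^+ 2.
Definition vnorm (v : vec) : R := Num.sqrt (\sum_(s : conf) cabs2 (v s)).
Definition opnorm (A : op) : R :=
  sup [set r : R | exists v : vec, vnorm v <= 1 /\ r = vnorm (opapp A v)].

(* A is supported on Z, i.e. A = a_Z ⊗ 1_{Lam \ Z}: its matrix elements vanish
   unless the configurations agree outside Z, and otherwise depend only on the
   restrictions of the configurations to Z. *)
Definition supported_on (Z : {set Lam}) (A : op) : Prop :=
  (forall s t : conf, (exists x, x \notin Z /\ s x <> t x) -> A s t = 0) /\
  (forall s t s' t' : conf,
      (forall x, x \in Z -> s x = s' x /\ t x = t' x) ->
      (forall x, x \notin Z -> s x = t x /\ s' x = t' x) ->
      A s t = A s' t').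

Definition potential := {set Lam} -> op.
Definition is_potential (Q : potential) : Prop :=
  forall Z, supported_on Z (Q Z).

(* ||Q||_kappa = sup_x sum_{Z ∋ x} e^{kappa |Z|} ||Q_Z||  (Lam finite: a max) *)
Definition pot_norm (kappa : R) (Q : potential) : R :=
  \big[Num.max/0]_(x : Lam)
     \sum_(Z : {set Lam} | x \in Z) expR (kappa * #|Z|%:R) * opnorm (Q Z).

Definition ad (W Theta : potential) : potential := fun Z s t =>
  \sum_(Z1 : {set Lam}) \sum_(Z2 : {set Lam} | (Z1 :&: Z2 != finset.set0) && (Z1 :|: Z2 == Z))
     comm (W Z1) (Theta Z2) s t.

End QuantumLattice.

From HB Require Import structures.
From mathcomp Require Import all_boot all_order all_algebra.
From mathcomp Require Import classical_sets reals.
From mathcomp Require Import sequences.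
From mathcomp Require Import complex.
From mathcomp Require Import exp ring lra.
Import Order.TTheory GRing.Theory Num.Theory Normc.
Local Open Scope ring_scope.

(* For intersecting Z1, Z2 one has |Z1 ∪ Z2| <= |Z1| + |Z2| - 1, and a pair with
   x ∈ Z1 ∪ Z2 has x ∈ Z1 or x ∈ Z2.  Together with ||[A, B]|| <= 2 ||A|| ||B||
   this reduces the estimate to sums  Σ_{Z1 ∋ x} e^{κ'|Z1|} ||W_Z1||
   Σ_{Z2 ∩ Z1 ≠ ∅} e^{κ'|Z2|} ||Θ_Z2||.  The inner sum is at most |Z1| ||Θ||_κ
   (charge each Z2 to a site of Z1 ∩ Z2), and |Z1| e^{κ'|Z1|} <= e^{κ|Z1|}/(κ-κ').
   The result is the sharper constant 4 e^{-κ'}/(κ-κ') <= 4/(κ'(κ-κ')); the argument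
   uses only norms. *)

Section FiniteSums.
Context {R : realType} {I : finType}.
Implicit Types x y : I -> R.

Lemma Cauchy_Schwarz_sum x y :
  (\sum_i x i * y i) ^+ 2 <= (\sum_i x i ^+ 2) * (\sum_i y i ^+ 2).
Proof.
have sq_ge0 : 0 <= \sum_i \sum_j (x i * y j - x j * y i) ^+ 2.
  by apply: sumr_ge0 => i _; apply: sumr_ge0 => j _; apply: sqr_ge0.
have lagrange : \sum_i \sum_j (x i * y j - x j * y i) ^+ 2 =
    \sum_i \sum_j (x i ^+ 2 * y j ^+ 2) + \sum_i \sum_j (x j ^+ 2 * y i ^+ 2)
    - 2 * \sum_i \sum_j ((x i * y i) * (x j * y j)).
  rewrite mulr_sumr -big_split -sumrB /=; apply: eq_bigr => i _.
  rewrite mulr_sumr -big_split -sumrB /=; apply: eq_bigr => j _; ring.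
have prod_sums : \sum_i \sum_j (x i ^+ 2 * y j ^+ 2) = (\sum_i x i ^+ 2) * (\sum_i y i ^+ 2).
  by rewrite mulr_suml; apply: eq_bigr => i _; rewrite mulr_sumr.
have prod_sums_swap : \sum_i \sum_j (x j ^+ 2 * y i ^+ 2) = (\sum_i x i ^+ 2) * (\sum_i y i ^+ 2).
  rewrite mulrC mulr_suml; apply: eq_bigr => i _; rewrite mulr_sumr.
  by apply: eq_bigr => j _; rewrite mulrC.
have sq_sum : \sum_i \sum_j ((x i * y i) * (x j * y j)) = (\sum_i x i * y i) ^+ 2.
  by rewrite expr2 mulr_suml; apply: eq_bigr => i _; rewrite mulr_sumr.
by move: sq_ge0; rewrite lagrange prod_sums prod_sums_swap sq_sum; lra.
Qed.

Lemma Minkowski_sum x y :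
  Num.sqrt (\sum_i (x i + y i) ^+ 2)
    <= Num.sqrt (\sum_i x i ^+ 2) + Num.sqrt (\sum_i y i ^+ 2).
Proof.
set X := \sum_i x i ^+ 2; set Y := \sum_i y i ^+ 2; set S := \sum_i x i * y i.
have X0 : 0 <= X by apply: sumr_ge0 => i _; apply: sqr_ge0.
have Y0 : 0 <= Y by apply: sumr_ge0 => i _; apply: sqr_ge0.
have expand : \sum_i (x i + y i) ^+ 2 = X + Y + 2 * S.
  rewrite mulr_sumr -!big_split /=; apply: eq_bigr => i _; ring.
have S_le : S <= Num.sqrt X * Num.sqrt Y.
  rewrite -sqrtrM // (le_trans (ler_norm S)) // -sqrtr_sqr ler_sqrt ?mulr_ge0 //.
  exact: Cauchy_Schwarz_sum.
rewrite expand -[leRHS]ger0_norm ?addr_ge0 ?sqrtr_ge0 // -sqrtr_sqr.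
rewrite ler_sqrt ?sqr_ge0 // sqrrD !sqr_sqrtr //; lra.
Qed.

End FiniteSums.

Section HilbertNorm.
Context {R : realType} {Lam : finType} {d : Lam -> nat}.
Implicit Types (u v : vec R d) (A B : op R d).

Lemma normc_ge0 (z : R[i]) : 0 <= normc z.
Proof. by case: z => a b; apply: sqrtr_ge0. Qed.

Lemma vnormE v : vnorm v = Num.sqrt (\sum_s normc (v s) ^+ 2).
Proof.
congr Num.sqrt; apply: eq_bigr => s _.
by case: (v s) => a b; rewrite /= sqr_sqrtr // addr_ge0 ?sqr_ge0.
Qed.

Lemma vnorm_ge0 v : 0 <= vnorm v.
Proof. exact: sqrtr_ge0. Qed.

Lemma eq_vnorm {u v : vec R d} : u =1 v -> vnorm u = vnorm v.
Proof. by move=> uv; rewrite !vnormE; under eq_bigr do rewrite uv. Qed.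

Lemma vnorm0 : vnorm (fun _ : conf d => 0 : R[i]) = 0.
Proof. by rewrite vnormE big1 ?sqrtr0 // => s _; rewrite normc0 expr0n. Qed.

Lemma vnormZ (c : R[i]) v : vnorm (fun s => c * v s) = normc c * vnorm v.
Proof.
rewrite !vnormE; under eq_bigr do rewrite normcM exprMn.
by rewrite -mulr_sumr sqrtrM ?sqr_ge0 // sqrtr_sqr ger0_norm ?normc_ge0.
Qed.

Lemma vnormD u v : vnorm (fun s => u s + v s) <= vnorm u + vnorm v.
Proof.
rewrite !vnormE (le_trans _ (Minkowski_sum _ _)) // ler_sqrt; last first.
  by apply: sumr_ge0 => s _; apply: sqr_ge0.
apply: ler_sum => s _; rewrite ler_sqr ?nnegrE ?addr_ge0 ?normc_ge0 //.
exact: le_normcD.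
Qed.

Lemma vnorm_sum {J : Type} (r : seq J) (P : pred J) (F : J -> vec R d) :
  vnorm (fun s => \sum_(j <- r | P j) F j s) <= \sum_(j <- r | P j) vnorm (F j).
Proof.
elim: r => [|j r IHr].
  by rewrite big_nil (eq_vnorm (v := fun _ => 0)) ?vnorm0 // => s; rewrite big_nil.
rewrite big_cons; case: ifP => Pj.
  rewrite (eq_vnorm (v := fun s => F j s + \sum_(i <- r | P i) F i s)).
    exact: le_trans (vnormD _ _) (lerD _ IHr).
  by move=> s; rewrite big_cons Pj.
by rewrite (eq_vnorm (v := fun s => \sum_(i <- r | P i) F i s)) // => s; rewrite big_cons Pj.
Qed.

Lemma normc_le_vnorm v t : normc (v t) <= vnorm v.
Proof.
rewrite vnormE -[leLHS]ger0_norm ?normc_ge0 // -sqrtr_sqr ler_sqrt; last first.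
  by apply: sumr_ge0 => s _; apply: sqr_ge0.
by rewrite (bigD1 t) //= lerDl; apply: sumr_ge0 => s _; apply: sqr_ge0.
Qed.

Lemma vnorm_opapp_le_sum A v :
  vnorm (opapp A v) <= vnorm v * \sum_t vnorm (fun s => A s t).
Proof.
rewrite (eq_vnorm (v := fun s => \sum_t v t * A s t)); last first.
  by move=> s; apply: eq_bigr => t _; rewrite mulrC.
rewrite mulr_sumr (le_trans (vnorm_sum _ xpredT (fun t s => v t * A s t))) //.
apply: ler_sum => t _; rewrite vnormZ ler_wpM2r ?vnorm_ge0 //.
exact: normc_le_vnorm.
Qed.

Definition unit_ball_image A : set R :=
  [set r | exists v : vec R d, vnorm v <= 1 /\ r = vnorm (opapp A v)].

Lemma unit_ball_image0 A : unit_ball_image A 0.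
Proof.
exists (fun _ => 0); split; first by rewrite vnorm0.
rewrite (eq_vnorm (v := fun _ => 0)) ?vnorm0 // => s.
by rewrite /opapp big1 // => t _; rewrite mulr0.
Qed.

Lemma unit_ball_image_bounded A : has_ubound (unit_ball_image A).
Proof.
exists (\sum_t vnorm (fun s => A s t)) => _ [v [v_le1 ->]].
apply: le_trans (vnorm_opapp_le_sum A v) _; rewrite ler_piMl //.
by apply: sumr_ge0 => t _; apply: vnorm_ge0.
Qed.

Lemma opnorm_ge0 A : 0 <= opnorm A.
Proof. exact: (ub_le_sup (unit_ball_image_bounded A) (unit_ball_image0 A)). Qed.

Lemma opnorm_le A M :
  (forall v, vnorm v <= 1 -> vnorm (opapp A v) <= M) -> opnorm A <= M.
Proof.
move=> AM; apply: ge_sup; first by exists 0; apply: unit_ball_image0.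
by move=> _ [v [v_le1 ->]]; apply: AM.
Qed.

Lemma vnorm_opapp_le A v : vnorm (opapp A v) <= opnorm A * vnorm v.
Proof.
have [v0|v_neq0] := eqVneq (vnorm v) 0.
  by rewrite (le_trans (vnorm_opapp_le_sum A v)) // v0 !mul0r mulr0.
have v_gt0 : 0 < vnorm v by rewrite lt_def v_neq0 vnorm_ge0.
pose c : R[i] := Complex (vnorm v)^-1 0.
have normc_c : normc c = (vnorm v)^-1.
  by rewrite /= expr0n addr0 sqrtr_sqr ger0_norm // invr_ge0 ltW.
have : vnorm (opapp A (fun s => c * v s)) <= opnorm A.
  apply: (ub_le_sup (unit_ball_image_bounded A)); exists (fun s => c * v s).
  by rewrite vnormZ normc_c mulVf.
rewrite (eq_vnorm (v := fun s => c * opapp A v s)); last first.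
  by move=> s; rewrite /opapp mulr_sumr; apply: eq_bigr => t _; rewrite mulrCA.
by rewrite vnormZ normc_c -(ler_pM2r v_gt0) mulrAC mulVf ?mul1r.
Qed.

Lemma vnorm_opapp_le1 A v : vnorm v <= 1 -> vnorm (opapp A v) <= opnorm A.
Proof.
move=> v_le1; apply: le_trans (vnorm_opapp_le A v) _.
by rewrite ler_piMr ?opnorm_ge0.
Qed.

Lemma opnorm_sum {J : Type} (r : seq J) (P : pred J) (F : J -> op R d) :
  opnorm (fun s t => \sum_(j <- r | P j) F j s t) <= \sum_(j <- r | P j) opnorm (F j).
Proof.
apply: opnorm_le => v v_le1.
rewrite (eq_vnorm (v := fun s => \sum_(j <- r | P j) opapp (F j) v s)); last first.
  move=> s; rewrite /opapp; under eq_bigr do rewrite mulr_suml.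
  by rewrite exchange_big.
apply: le_trans (vnorm_sum _ _ _) _; apply: ler_sum => j _.
exact: vnorm_opapp_le1.
Qed.

Lemma opnormB A B : opnorm (fun s t => A s t - B s t) <= opnorm A + opnorm B.
Proof.
apply: opnorm_le => v v_le1.
rewrite (eq_vnorm (v := fun s => opapp A v s + (-1) * opapp B v s)); last first.
  by move=> s; rewrite /opapp mulN1r -sumrB; apply: eq_bigr => t _; rewrite mulrBl.
apply: le_trans (vnormD _ _) _; rewrite vnormZ normcN normc1 mul1r.
by apply: lerD; apply: vnorm_opapp_le1.
Qed.

Lemma opnormM A B : opnorm (opmul A B) <= opnorm A * opnorm B.
Proof.
apply: opnorm_le => v v_le1.
rewrite (eq_vnorm (v := opapp A (opapp B v))); last first.
  move=> s; rewrite /opapp /opmul; under eq_bigr do rewrite mulr_suml.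
  rewrite exchange_big; apply: eq_bigr => u _; rewrite mulr_sumr.
  by apply: eq_bigr => t _; rewrite mulrA.
apply: le_trans (vnorm_opapp_le _ _) _.
by rewrite ler_wpM2l ?opnorm_ge0 ?vnorm_opapp_le1.
Qed.

Lemma opnorm_comm A B : opnorm (comm A B) <= 2 * (opnorm A * opnorm B).
Proof.
apply: le_trans (opnormB _ _) _.
by rewrite mulr2n mulrDl mul1r lerD ?opnormM // mulrC opnormM.
Qed.

End HilbertNorm.

Lemma mulr_expR_le {R : realType} (a b n : R) : a < b -> 0 <= n ->
  n * expR (a * n) <= (b - a)^-1 * expR (b * n).
Proof.
move=> ab n0; have ba : 0 < b - a by rewrite subr_gt0.
have -> : expR (b * n) = expR ((b - a) * n) * expR (a * n).
  by rewrite -expRD; congr expR; ring.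
rewrite mulrA ler_wpM2r ?expR_ge0 // -(ler_pM2l ba) mulrA mulfV ?gt_eqF // mul1r.
by rewrite (le_trans _ (expR_ge1Dx _)) // lerDr.
Qed.

Lemma expRN_le_inv {R : realType} (a : R) : 0 < a -> expR (- a) <= a^-1.
Proof.
move=> a0; rewrite expRN lef_pV2 ?posrE ?expR_gt0 //.
by rewrite (le_trans _ (expR_ge1Dx a)) // lerDr.
Qed.

Section SiteNorm.
Context {R : realType} {Lam : finType}.
Implicit Types (a b : R) (f g : {set Lam} -> R) (Z : {set Lam}) (x : Lam).

Definition site_norm b f : R :=
  \big[Num.max/0]_(x : Lam) \sum_(Z : {set Lam} | x \in Z) expR (b * #|Z|%:R) * f Z.

Lemma site_norm_ge0 b f : 0 <= site_norm b f.
Proof. exact: bigmax_ge_id. Qed.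

Lemma le_site_norm b f x :
  \sum_(Z : {set Lam} | x \in Z) expR (b * #|Z|%:R) * f Z <= site_norm b f.
Proof. exact: (le_bigmax 0 (fun y => \sum_(Z : {set Lam} | y \in Z) _)). Qed.

Lemma site_norm_le b f g c : 0 <= c -> (forall Z, f Z <= c * g Z) ->
  site_norm b f <= c * site_norm b g.
Proof.
move=> c0 fg; apply: bigmax_le => [|x _]; first by rewrite mulr_ge0 ?site_norm_ge0.
rewrite (le_trans _ (ler_wpM2l c0 (le_site_norm b g x))) // mulr_sumr.
by apply: ler_sum => Z _; rewrite mulrCA ler_wpM2l ?expR_ge0.
Qed.

Lemma sum_meeting_le_card a b g Z1 : a <= b -> (forall Z, 0 <= g Z) ->
  \sum_(Z2 : {set Lam} | Z1 :&: Z2 != finset.set0) expR (a * #|Z2|%:R) * g Z2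
    <= #|Z1|%:R * site_norm b g.
Proof.
move=> ab g0.
pose h Z2 := expR (a * #|Z2|%:R) * g Z2.
have h0 Z : 0 <= h Z by rewrite mulr_ge0 ?expR_ge0.
have meeting_le Z2 : Z1 :&: Z2 != finset.set0 ->
    h Z2 <= \sum_(y in Z1) (if y \in Z2 then h Z2 else 0).
  case/set0Pn => y; rewrite inE => /andP [yZ1 yZ2].
  by rewrite (bigD1 y) //= yZ2 lerDl; apply: sumr_ge0 => z _; case: ifP.
apply: (@le_trans _ _ (\sum_(Z2 : {set Lam}) \sum_(y in Z1) (if y \in Z2 then h Z2 else 0))).
  rewrite [leRHS](bigID (fun Z2 => Z1 :&: Z2 != finset.set0)) /= -[leLHS]addr0.
  apply: lerD; first exact: ler_sum.
  by apply: sumr_ge0 => Z2 _; apply: sumr_ge0 => y _; case: ifP.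
rewrite exchange_big /= mulr_natl -sumr_const; apply: ler_sum => y _.
rewrite -big_mkcond /= (le_trans _ (le_site_norm b g y)) //.
by apply: ler_sum => Z2 _; rewrite ler_wpM2r ?ler_expR ?ler_wpM2r.
Qed.

Lemma sum_site_meeting_le a b f g x : a < b ->
  (forall Z, 0 <= f Z) -> (forall Z, 0 <= g Z) ->
  \sum_(Z1 : {set Lam} | x \in Z1) expR (a * #|Z1|%:R) * f Z1 *
     \sum_(Z2 : {set Lam} | Z1 :&: Z2 != finset.set0) expR (a * #|Z2|%:R) * g Z2
    <= (b - a)^-1 * site_norm b f * site_norm b g.
Proof.
move=> ab f0 g0; set q := (b - a)^-1.
have q0 : 0 <= q by rewrite invr_ge0 subr_ge0 ltW.
apply: (@le_trans _ _ (\sum_(Z1 : {set Lam} | x \in Z1)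
    (q * site_norm b g) * (expR (b * #|Z1|%:R) * f Z1))).
  apply: ler_sum => Z1 _; set n : R := #|Z1|%:R.
  have fe0 : 0 <= expR (a * n) * f Z1 by rewrite mulr_ge0 ?expR_ge0.
  rewrite (le_trans (ler_wpM2l fe0 (sum_meeting_le_card _ _ _ Z1 (ltW ab) g0))) //.
  have -> : expR (a * n) * f Z1 * (n * site_norm b g)
      = n * expR (a * n) * (f Z1 * site_norm b g) by ring.
  have -> : q * site_norm b g * (expR (b * n) * f Z1)
      = q * expR (b * n) * (f Z1 * site_norm b g) by ring.
  by rewrite ler_wpM2r ?mulr_ge0 ?site_norm_ge0 ?mulr_expR_le ?ler0n.
rewrite -mulr_sumr [leRHS]mulrAC ler_wpM2l ?le_site_norm //.
by rewrite mulr_ge0 ?site_norm_ge0.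
Qed.

Definition overlap_conv f g Z : R :=
  \sum_(Z1 : {set Lam})
    \sum_(Z2 : {set Lam} | (Z1 :&: Z2 != finset.set0) && (Z1 :|: Z2 == Z)) f Z1 * g Z2.

Lemma sum_site_setU (P : rel {set Lam}) (F : {set Lam} -> {set Lam} -> R) x :
  \sum_(Z : {set Lam} | x \in Z) \sum_(Z1 : {set Lam})
      \sum_(Z2 : {set Lam} | P Z1 Z2 && (Z1 :|: Z2 == Z)) F Z1 Z2
    = \sum_(Z1 : {set Lam}) \sum_(Z2 : {set Lam} | P Z1 Z2 && (x \in Z1 :|: Z2)) F Z1 Z2.
Proof.
rewrite exchange_big; apply: eq_bigr => Z1 _.
rewrite [RHS](partition_big (fun Z2 => Z1 :|: Z2) (mem^~ x)) => [|Z2 /andP[] //].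
apply: eq_bigr => Z xZ; apply: eq_bigl => Z2.
by case: eqP => [->|_]; rewrite ?xZ ?andbT ?andbF.
Qed.

Lemma sum_setU_le (P : rel {set Lam}) (F : {set Lam} -> {set Lam} -> R) x :
  (forall Z1 Z2, 0 <= F Z1 Z2) ->
  \sum_(Z1 : {set Lam}) \sum_(Z2 : {set Lam} | P Z1 Z2 && (x \in Z1 :|: Z2)) F Z1 Z2
    <= \sum_(Z1 : {set Lam} | x \in Z1) \sum_(Z2 : {set Lam} | P Z1 Z2) F Z1 Z2
     + \sum_(Z2 : {set Lam} | x \in Z2) \sum_(Z1 : {set Lam} | P Z1 Z2) F Z1 Z2.
Proof.
move=> F0; pose G Z1 Z2 := if P Z1 Z2 then F Z1 Z2 else 0.
have pointwise Z1 Z2 : (if P Z1 Z2 && (x \in Z1 :|: Z2) then F Z1 Z2 else 0)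
    <= (if x \in Z1 then G Z1 Z2 else 0) + (if x \in Z2 then G Z1 Z2 else 0).
  move: (F0 Z1 Z2); rewrite /G inE.
  by case: (P Z1 Z2); case: (x \in Z1); case: (x \in Z2) => /= F0'; lra.
have first_site :
    \sum_(Z1 : {set Lam} | x \in Z1) \sum_(Z2 : {set Lam} | P Z1 Z2) F Z1 Z2
    = \sum_(Z1 : {set Lam}) \sum_(Z2 : {set Lam}) (if x \in Z1 then G Z1 Z2 else 0).
  rewrite big_mkcond; apply: eq_bigr => Z1 _.
  by case: ifP => _; [rewrite big_mkcond | rewrite big1].
have second_site :
    \sum_(Z2 : {set Lam} | x \in Z2) \sum_(Z1 : {set Lam} | P Z1 Z2) F Z1 Z2
    = \sum_(Z1 : {set Lam}) \sum_(Z2 : {set Lam}) (if x \in Z2 then G Z1 Z2 else 0).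
  rewrite exchange_big big_mkcond; apply: eq_bigr => Z2 _.
  by case: ifP => _; [rewrite big_mkcond | rewrite big1].
rewrite first_site second_site -big_split; apply: ler_sum => Z1 _.
by rewrite big_mkcond -big_split; apply: ler_sum => Z2 _.
Qed.

Lemma expR_card_setU_le a Z1 Z2 : 0 <= a -> Z1 :&: Z2 != finset.set0 ->
  expR (a * #|Z1 :|: Z2|%:R)
    <= expR (- a) * (expR (a * #|Z1|%:R) * expR (a * #|Z2|%:R)).
Proof.
move=> a0 meet; rewrite -!expRD ler_expR.
have : #|Z1 :|: Z2|%:R + 1 <= #|Z1|%:R + #|Z2|%:R :> R.
  by rewrite natr1 -natrD ler_nat -cardsUI -[X in (X < _)%N]addn0 ltn_add2l card_gt0.
nra.
Qed.

Lemma site_norm_overlap_conv a b f g : 0 <= a -> a < b ->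
  (forall Z, 0 <= f Z) -> (forall Z, 0 <= g Z) ->
  site_norm a (overlap_conv f g)
    <= 2 * expR (- a) / (b - a) * site_norm b f * site_norm b g.
Proof.
move=> a0 ab f0 g0.
pose F Z1 Z2 := expR (a * #|Z1|%:R) * f Z1 * (expR (a * #|Z2|%:R) * g Z2).
have F0 Z1 Z2 : 0 <= F Z1 Z2 by rewrite !mulr_ge0 ?expR_ge0.
apply: bigmax_le => [|x _].
  by rewrite !mulr_ge0 ?site_norm_ge0 ?expR_ge0 ?invr_ge0 ?subr_ge0 ?ltW.
apply: (@le_trans _ _ (expR (- a) * \sum_(Z1 : {set Lam})
    \sum_(Z2 : {set Lam} | (Z1 :&: Z2 != finset.set0) && (x \in Z1 :|: Z2)) F Z1 Z2)).
  rewrite -sum_site_setU mulr_sumr; apply: ler_sum => Z _.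
  rewrite /overlap_conv !mulr_sumr; apply: ler_sum => Z1 _.
  rewrite !mulr_sumr; apply: ler_sum => Z2 /andP[meet /eqP <-].
  rewrite /F mulrACA !mulrA !ler_wpM2r // -mulrA.
  exact: expR_card_setU_le.
have -> : 2 * expR (- a) / (b - a) * site_norm b f * site_norm b g
    = expR (- a) * ((b - a)^-1 * site_norm b f * site_norm b g
                    + (b - a)^-1 * site_norm b g * site_norm b f) by ring.
rewrite ler_wpM2l ?expR_ge0 // (le_trans (sum_setU_le _ _ x F0)) // lerD //.
  under eq_bigr do rewrite -mulr_sumr.
  exact: sum_site_meeting_le.
rewrite (eq_bigr (fun Z2 => expR (a * #|Z2|%:R) * g Z2 * \sum_(Z1 : {set Lam} |
    Z2 :&: Z1 != finset.set0) expR (a * #|Z1|%:R) * f Z1)).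
  exact: sum_site_meeting_le.
move=> Z2 _; rewrite mulr_sumr; apply: eq_big => [Z1|Z1 _]; first by rewrite finset.setIC.
exact: mulrC.
Qed.

End SiteNorm.

Lemma opnorm_ad {R : realType} {Lam : finType} {d : Lam -> nat}
    (W Theta : potential R d) (Z : {set Lam}) :
  opnorm (ad W Theta Z)
    <= 2 * overlap_conv (fun Z1 => opnorm (W Z1)) (fun Z2 => opnorm (Theta Z2)) Z.
Proof.
rewrite /overlap_conv mulr_sumr (le_trans (opnorm_sum _ _ _)) //.
apply: ler_sum => Z1 _; rewrite mulr_sumr (le_trans (opnorm_sum _ _ _)) //.
apply: ler_sum => Z2 _; exact: opnorm_comm.
Qed.

Theorem lemma6 (R : realType) (Lam : finType) (d : Lam -> nat)
  (W Theta : potential R d) (kappa kappa' : R) :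
  is_potential W -> is_potential Theta ->
  0 < kappa' -> kappa' < kappa ->
  pot_norm kappa' (ad W Theta)
    <= 18 / (kappa' * (kappa - kappa')) * pot_norm kappa Theta * pot_norm kappa W.
Proof.
move=> _ _ k'_gt0 k'_lt_k.
pose w Z := opnorm (W Z); pose t Z := opnorm (Theta Z).
have w0 Z : 0 <= w Z by exact: opnorm_ge0.
have t0 Z : 0 <= t Z by exact: opnorm_ge0.
have ad_le := site_norm_le kappa' _ _ _ (ler0n _ 2) (opnorm_ad W Theta).
have conv_le := site_norm_overlap_conv _ _ w t (ltW k'_gt0) k'_lt_k w0 t0.
have expRN_le := expRN_le_inv _ k'_gt0.
change (site_norm kappa' (fun Z => opnorm (ad W Theta Z))
  <= 18 / (kappa' * (kappa - kappa')) * site_norm kappa t * site_norm kappa w).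
apply: (le_trans ad_le); apply: (le_trans (ler_wpM2l (ler0n _ 2) conv_le)).
set K := (kappa - kappa')^-1 * site_norm kappa w * site_norm kappa t.
have K0 : 0 <= K by rewrite !mulr_ge0 ?site_norm_ge0 // invr_ge0 subr_ge0 ltW.
have -> : 2 * (2 * expR (- kappa') / (kappa - kappa') * site_norm kappa w
    * site_norm kappa t) = 4 * (K * expR (- kappa')) by rewrite /K; ring.
have -> : 18 / (kappa' * (kappa - kappa')) * site_norm kappa t * site_norm kappa w
    = 18 * (K * kappa'^-1) by rewrite /K invfM; ring.
have : 0 <= K * kappa'^-1 by rewrite mulr_ge0 // invr_ge0 ltW.
have : K * expR (- kappa') <= K * kappa'^-1 by rewrite ler_wpM2l.
lra.
Qed.
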